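(* The function $f$ on permutations defined by $f(\alpha)=c(\sigma_m^{-1}\alpha)$ for $\alpha\in\mathbb{S}_m$ (the number of faces, i.e. boundary components, of the hypermap of $\alpha$) satisfies the generalized Vassiliev relations in the following strong sense: for every generalized Vassiliev element $E(\gamma,q,v)=\sum_{j\in v}(\alpha_{j-1}-\alpha_j)$, the terms can be matched into pairs $(\alpha_{j-1},\alpha_{j'})$ with opposite signs and $f(\alpha_{j-1})=f(\alpha_{j'})$. In particular, for any function $g$ of one integer variable, the linear extension of $\alpha\mapsto g(f(\alpha))$ vanishes on all generalized Vassiliev elements (so the genus of a hyper chord diagram is a generalized weight system).
   Context: $\sigma_m=(1,\dots,m)$; $c(\beta)$ denotes the number of cycles of a permutation $\beta$. Generalized Vassiliev elements: let $m\ge2$, $\gamma\in\mathbb{S}_{m-1}$, $q\in[m-1]\cup\{*\}$. For $t\in\{0,\dots,m-1\}$ let $\alpha_t\in\mathbb{S}_m$ be obtained by inserting a new point $x$ (free leg) into the line $1<\dots<m-1$ in the gap between $t$ and $t+1$, relabeling all points $1,\dots,m$ in order, letting the permutation act as $\gamma$ on old points except $q\mapsto x\mapsto\gamma(q)$ if $q\ne*$, and $x$ fixed if $q=*$. For a cycle $v$ of $\gamma$, $E(\gamma,q,v)=\sum_{j\in v}(\alpha_{j-1}-\alpha_j)\in\mathbb{C}[\mathbb{S}_m]$. *)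

From mathcomp Require Import all_boot all_order all_fingroup all_algebra all_field.
Set Implicit Arguments. Unset Strict Implicit. Unset Printing Implicit Defensive.
Import GRing.Theory Num.Theory.
Local Open Scope ring_scope.

(* Conventions: m = n.+1 (so m >= 2 iff 0 < n).  Points 1..m-1 of the paper
   are the ordinals 0..n-1 of 'I_n (paper point p <-> ordinal p-1); points
   1..m are 'I_n.+1.  The "*" value of q is None. *)

Definition sigma (m : nat) : 'S_m := perm (@ordS_inj m).

Definition ncycles (T : finType) (b : {perm T}) : nat := #|porbits b|.

(* f(alpha) = c(sigma_m^{-1} alpha).  Functional composition
   (sigma^{-1} o alpha) is written alpha * sigma^-1 in mathcomp. *)
Definition faces (m : nat) (a : 'S_m) : nat := ncycles (a * (sigma m)^-1).

(* alpha_t : the new point x sits in the gap t (0 <= t <= m-1), i.e. it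
   gets 0-based label t in 'I_n.+1, and an old point i : 'I_n gets label
   lift t i (= i if i < t, i+1 otherwise). *)
Definition alpha_fun n (gamma : 'S_n) (q : option 'I_n) (t : 'I_n.+1)
    (y : 'I_n.+1) : 'I_n.+1 :=
  match unlift t y with
  | None => if q is Some q0 then lift t (gamma q0) else t
  | Some i => if q == Some i then t else lift t (gamma i)
  end.

Lemma alpha_fun_inj n gamma q t : injective (@alpha_fun n gamma q t).
Proof.
move=> y1 y2; rewrite /alpha_fun.
have nl k : (t == lift t k) = false by exact: negbTE (neq_lift t k).
case: (unliftP t y1) => [i1 ->|->]; case: (unliftP t y2) => [i2 ->|->] //;
  case: q => [q0|] /=; try case: eqP => [[e1]|ne1]; try case: eqP => [[e2]|ne2];
  subst => //; try (by move/eqP; rewrite ?nl // eq_sym nl);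
  try (by move/lift_inj/perm_inj ->);
  try (by move/lift_inj/perm_inj => E; subst).
Qed.

Definition alpha n (gamma : 'S_n) (q : option 'I_n) (t : 'I_n.+1) : 'S_n.+1 :=
  perm (@alpha_fun_inj n gamma q t).

(* For 0-based j : 'I_n (paper point j+1) the
   paper's alpha_{(j+1)-1} is alpha (inord j) and alpha_{j+1} is
   alpha (inord j.+1). *)
Definition vassiliev n (gamma : 'S_n) (q : option 'I_n) (v : {set 'I_n})
  : {ffun 'S_n.+1 -> algC} :=
  [ffun b => \sum_(j in v)
      ((b == alpha gamma q (inord j))%:R - (b == alpha gamma q (inord j.+1))%:R)].

Definition linext m (h : 'S_m -> algC) (E : {ffun 'S_m -> algC}) : algC :=
  \sum_(b : 'S_m) E b * h b.

From mathcomp Require Import all_boot all_order all_fingroup all_algebra all_field.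
From mathcomp Require Import zify.
Set Implicit Arguments. Unset Strict Implicit. Unset Printing Implicit Defensive.
Import GRing.Theory.

(* Let rho := gamma * sigma_n^-1 be the face permutation of gamma and, for a
   gap t, let s_t be the old point following t cyclically and
   y_t := gamma^-1 s_t.  Inserting t into sigma_n costs the transposition
   (t, s_t); conjugating it past gamma (extended by the fixed point t) turns
   it into (t, y_t), so the face permutation of alpha_t is rho extended by the
   fixed point t, multiplied by (t, y_t) and, when q <> *, by the leg
   transposition (t, q).  Each transposition splits or merges one cycle,
   hence f(alpha_t) depends on t only through whether q lies in the
   rho-orbit of y_t.  As y_(j-1) = rho y_(gamma^-1 j), the terms alpha_(j-1)
   and alpha_(gamma^-1 j) have the same number of faces, and gamma^-1
   permutes the cycle v. *)

Local Open Scope group_scope.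

Section PorbitsTperm.
Variable T : finType.
Implicit Types (s : {perm T}) (x y : T).

Lemma porbit_fix s x : s x = x -> porbit s x = [set x].
Proof.
move=> sx; apply/setP => y; rewrite inE.
by apply/porbitP/eqP => [[i ->]|->]; [rewrite permX_fix | exists 0; rewrite perm1].
Qed.

Lemma porbit_permV s x : porbit s (s^-1 x) = porbit s x.
Proof. by rewrite -(porbit_perm s 1) expg1 permKV. Qed.

Lemma card_porbits_mul_tperm s x y : x != y ->
  #|porbits (tperm x y * s)| =
    if x \in porbit s y then #|porbits s|.+1 else #|porbits s|.-1.
Proof.
move=> neq_xy; have := porbits_mul_tperm s x y; rewrite /= neq_xy.
case: (x \in porbit s y) => /=; first by rewrite addn0 addn1.
by rewrite addn2 addn1 => -[<-].
Qed.

Lemma card_porbits_mul_tperm_fix s x y : s x = x -> x != y ->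
  #|porbits (tperm x y * s)| = #|porbits s|.-1.
Proof.
move=> sx neq_xy; rewrite card_porbits_mul_tperm // porbit_sym porbit_fix //.
by rewrite inE eq_sym (negbTE neq_xy).
Qed.

Lemma tperm_mul_tperm x y z : x != y -> x != z -> y != z ->
  tperm x y * tperm x z = tperm x z * tperm y z.
Proof.
move=> xy xz yz; rewrite conjgC tpermJ tpermL tpermD ?[tperm z y]tpermC //.
by rewrite eq_sym.
Qed.
End PorbitsTperm.

Section LiftPermPorbits.
Variables (n : nat) (t : 'I_n.+1).
Implicit Types (s : 'S_n) (x y : 'I_n).

Lemma lift_permX s k : lift_perm t t s ^+ k = lift_perm t t (s ^+ k).
Proof.
elim: k => [|k IHk]; first by rewrite !expg0 lift_perm1.
by rewrite !expgS IHk lift_permM.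
Qed.

Lemma mem_lift_porbit s x y :
  (lift t x \in porbit (lift_perm t t s) (lift t y)) = (x \in porbit s y).
Proof.
apply/porbitP/porbitP => -[k Hk]; exists k; move: Hk.
  by rewrite lift_permX lift_perm_lift => /lift_inj.
by rewrite lift_permX lift_perm_lift => ->.
Qed.

Lemma porbit_lift_perm s y :
  porbit (lift_perm t t s) (lift t y) = lift t @: porbit s y.
Proof.
apply/setP => z; case: (unliftP t z) => [x ->|->].
  by rewrite mem_lift_porbit mem_imset //; exact: lift_inj.
rewrite porbit_sym porbit_fix ?lift_perm_id // !inE eq_sym (negbTE (neq_lift _ _)).
by apply/esym/imsetP => -[x _ /eqP]; rewrite (negbTE (neq_lift _ _)).
Qed.

Lemma card_porbits_lift_perm s :
  #|porbits (lift_perm t t s)| = #|porbits s|.+1.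
Proof.
set L := lift_perm t t s; pose liftS (X : {set 'I_n}) := lift t @: X.
have porbitsL : porbits L = [set t] |: liftS @: porbits s.
  apply/setP => S; rewrite !inE; apply/imsetP/idP.
    move=> [z _ ->]; case: (unliftP t z) => [x ->|->].
      by rewrite porbit_lift_perm imset_f ?orbT ?imset_f.
    by rewrite porbit_fix ?lift_perm_id ?eqxx.
  case/orP => [/eqP ->|/imsetP [_ /imsetP [x _ ->] ->]].
    by exists t; rewrite ?porbit_fix ?lift_perm_id.
  by exists (lift t x); rewrite ?porbit_lift_perm.
rewrite porbitsL cardsU1 card_imset; last exact: imset_inj (@lift_inj _ t).
suff /negbTE -> : [set t] \notin liftS @: porbits s by [].
apply/imsetP => -[X _ /setP/(_ t)]; rewrite inE eqxx.
by move/esym/imsetP => -[x _ /eqP]; rewrite (negbTE (neq_lift _ _)).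
Qed.
End LiftPermPorbits.

Lemma modn_leq a m : (a <= m)%N -> a %% m = if a == m then 0%N else a.
Proof. by case: eqP => [->|ne le_am]; rewrite ?modnn // modn_small; lia. Qed.

Lemma sigmaE m (w : 'I_m) : sigma m w = (if w.+1 == m then 0%N else w.+1) :> nat.
Proof. by rewrite permE /= modn_leq. Qed.

Section SigmaLift.
Variables (n : nat) (n_gt0 : (0 < n)%N).

Definition gap_succ (t : 'I_n.+1) : 'I_n := Ordinal (ltn_pmod t n_gt0).

Lemma sigma_gap t : sigma n.+1 t = lift t (gap_succ t).
Proof.
apply: ord_inj; rewrite sigmaE /= modn_leq -1?ltnS // /bump; have := ltn_ord t.
by do 2!case: ifP => /eqP; case: leqP; lia.
Qed.

Lemma sigma_lift t u : sigma n.+1 (lift t u) =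
  if sigma n u == gap_succ t then t else lift t (sigma n u).
Proof.
apply: ord_inj; rewrite -val_eqE [in RHS]fun_if /= !sigmaE /= modn_leq -1?ltnS //.
have := ltn_ord t; have := ltn_ord u; rewrite /bump.
case: (u.+1 =P n); case: (nat_of_ord t =P n); case: (leqP t u).
all: move=> /= *; repeat case: eqP => ?; lia.
Qed.

Lemma sigma_lift_perm t :
  sigma n.+1 = lift_perm t t (sigma n) * tperm t (lift t (gap_succ t)).
Proof.
apply/permP => z; rewrite permM; case: (unliftP t z) => [u ->|->].
  rewrite sigma_lift lift_perm_lift; case: eqP => [->|/eqP ne]; first by rewrite tpermR.
  by rewrite tpermD // ?neq_lift // (inj_eq (@lift_inj _ t)) eq_sym.
by rewrite sigma_gap lift_perm_id tpermL.
Qed.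
End SigmaLift.

Definition face_perm m (a : 'S_m) : 'S_m := a * (sigma m)^-1.

Section Faces.
Variables (n : nat) (n_gt0 : (0 < n)%N) (gamma : 'S_n) (q : option 'I_n).

Definition leg_tperm (t : 'I_n.+1) : 'S_n.+1 :=
  if q is Some q0 then tperm t (lift t q0) else 1.

Lemma alphaE t : alpha gamma q t = leg_tperm t * lift_perm t t gamma.
Proof.
apply/permP => z; rewrite permM permE /alpha_fun /leg_tperm.
case: (unliftP t z) => [i ->|->]; rewrite ?liftK ?unlift_none; case: q => [q0|];
  rewrite ?perm1 ?tpermL ?lift_perm_lift ?lift_perm_id //.
case: eqP => [[->]|ne]; first by rewrite tpermR lift_perm_id.
rewrite tpermD ?neq_lift ?lift_perm_lift // (inj_eq (@lift_inj _ t)).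
by apply/eqP => eq_q0i; apply: ne; rewrite eq_q0i.
Qed.

Lemma face_perm_alpha t :
  face_perm (alpha gamma q t) =
  leg_tperm t * tperm t (lift t (gamma^-1 (gap_succ n_gt0 t))) *
  lift_perm t t (face_perm gamma).
Proof.
have lift_gammaV : lift_perm t t gamma * tperm t (lift t (gap_succ n_gt0 t)) =
    tperm t (lift t (gamma^-1 (gap_succ n_gt0 t))) * lift_perm t t gamma.
  by rewrite conjgCV tpermJ lift_permV lift_perm_id lift_perm_lift.
rewrite /face_perm alphaE (sigma_lift_perm n_gt0 t) invMg tpermV -!mulgA.
by rewrite [lift_perm _ _ gamma * _]mulgA lift_gammaV -mulgA lift_permV lift_permM.
Qed.

Lemma faces_alpha t : faces (alpha gamma q t) =
  if q is Some q0 then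
    if q0 \in porbit (face_perm gamma) (gamma^-1 (gap_succ n_gt0 t))
    then #|porbits (face_perm gamma)|.+1 else #|porbits (face_perm gamma)|.-1
  else #|porbits (face_perm gamma)|.
Proof.
have -> : faces (alpha gamma q t) = #|porbits (face_perm (alpha gamma q t))| by [].
rewrite face_perm_alpha /leg_tperm.
set y := gamma^-1 _; set L := lift_perm t t _.
have Lt : L t = t by rewrite lift_perm_id.
have cardL : #|porbits L| = #|porbits (face_perm gamma)|.+1.
  exact: card_porbits_lift_perm.
case: q => [q0|]; last by rewrite mul1g card_porbits_mul_tperm_fix ?neq_lift // cardL.
have [->|ne_q0y] := eqVneq q0 y; first by rewrite tperm2 mul1g cardL porbit_id.
rewrite tperm_mul_tperm ?neq_lift ?(inj_eq (@lift_inj _ t)) // -mulgA.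
rewrite card_porbits_mul_tperm_fix ?neq_lift //; last first.
  by rewrite permM tpermD ?Lt // eq_sym neq_lift.
rewrite card_porbits_mul_tperm ?(inj_eq (@lift_inj _ t)) // mem_lift_porbit cardL.
by case: ifP.
Qed.
End Faces.

Lemma faces_alpha_gammaV n (n_gt0 : (0 < n)%N) (gamma : 'S_n) q (j : 'I_n) :
  faces (alpha gamma q (inord j)) = faces (alpha gamma q (inord (gamma^-1 j).+1)).
Proof.
have gap_j : gap_succ n_gt0 (inord j) = j.
  by apply/val_inj; rewrite /= inordK ?modn_small // ltnS ltnW.
have gap_gammaVj : gap_succ n_gt0 (inord (gamma^-1 j).+1) = sigma n (gamma^-1 j).
  by apply/val_inj; rewrite [sigma n _]permE /= inordK // ltnS.
have same_orbit : porbit (face_perm gamma) (gamma^-1 j) =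
                  porbit (face_perm gamma) (gamma^-1 (sigma n (gamma^-1 j))).
  by rewrite -[in RHS](porbit_perm (face_perm gamma) 1) expg1 permM permKV permK.
by rewrite !faces_alpha gap_j gap_gammaVj same_orbit.
Qed.

Local Open Scope ring_scope.

Lemma linext_vassiliev n (h : 'S_n.+1 -> algC) (gamma : 'S_n) q v :
  linext h (vassiliev gamma q v) =
  \sum_(j in v) (h (alpha gamma q (inord j)) - h (alpha gamma q (inord j.+1))).
Proof.
have sum_delta a : \sum_b (b == a)%:R * h b = h a.
  by under eq_bigr => b _ do rewrite mulr_natl mulrb; rewrite -big_mkcond big_pred1_eq.
rewrite /linext; under eq_bigr => b _ do rewrite ffunE mulr_suml.
rewrite exchange_big; apply: eq_bigr => j _.
by under eq_bigr => b _ do rewrite mulrBl; rewrite sumrB !sum_delta.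
Qed.

Theorem mainTheorem4 (n : nat) (Hn : (0 < n)%N) (gamma : 'S_n)
    (q : option 'I_n) (i : 'I_n) :
  let v := porbit gamma i in
  (exists pi : {perm 'I_n},
     forall j, j \in v ->
       pi j \in v /\
       faces (alpha gamma q (inord j)) = faces (alpha gamma q (inord (pi j).+1)))
  /\
  (forall g : int -> algC,
     linext (fun a => g (faces a)%:Z) (vassiliev gamma q v) = 0).
Proof.
move=> v.
have mem_gammaV j : ((gamma^-1)%g j \in v) = (j \in v).
  by rewrite /v -!eq_porbit_mem porbit_permV.
split; first by exists (gamma^-1)%g => j v_j; rewrite mem_gammaV (faces_alpha_gammaV Hn).
move=> g; rewrite linext_vassiliev sumrB; apply/eqP; rewrite subr_eq0; apply/eqP.
under eq_bigr => j _ do rewrite (faces_alpha_gammaV Hn).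
rewrite [RHS](reindex_inj (@perm_inj _ (gamma^-1)%g)) /=.
by apply: eq_bigl => j; rewrite mem_gammaV.
Qed.
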